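(* Let $f:\Sigma^*\to\Sigma^*$ be a sequential transduction. Then $f$ is $\mathcal{A}p$-sequential if and only if $f$ is $\mathcal{A}p$-rational.
   Context: A congruence $\sim$ on $\Sigma^*$ is aperiodic if there is $n$ with $w^n\sim w^{n+1}$ for all words $w$; $\mathcal{A}p(\Sigma)$ is the set of aperiodic congruences of finite index. For an automaton $\mathcal A=(Q,\Delta,I,F)$, its transition congruence is $u\approx_{\mathcal A}v$ iff for all $p,q\in Q$, there is a run on $u$ from $p$ to $q$ iff there is one on $v$; $\mathcal A$ is aperiodic if $\approx_{\mathcal A}$ is aperiodic. A transducer $\mathcal T=(\mathcal A,o,i,t)$ consists of an automaton $\mathcal A$, outputs $o:\Delta\to\Sigma^*$, initial outputs $i:I\to\Sigma^*$ and final outputs $t:F\to\Sigma^*$, realizing the pairs $(u,i(q_0)\,o(\text{run})\,t(q_n))$ for accepting runs on $u$; it is functional if this relation is a partial function and sequential if $\mathcal A$ is deterministic. A transduction is sequential if realized by a sequential transducer, $\mathcal{A}p$-rational if realized by a functional transducer with aperiodic underlying automaton, and $\mathcal{A}p$-sequential if realized by a sequential transducer with aperiodic underlying automaton. *)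

From mathcomp Require Import all_boot.
Set Implicit Arguments. Unset Strict Implicit. Unset Printing Implicit Defensive.

(* The underlying automaton is (delta, init, fin); the output
   of a transition (p,a,q) is out p a q (only meaningful when (p,a,q) is in
   delta, since runs only use transitions of delta). *)
Record transducer (Sigma Q : finType) := Transducer {
  delta : {set Q * Sigma * Q};
  init  : {set Q};
  fin   : {set Q};
  out   : Q -> Sigma -> Q -> seq Sigma;
  iout  : Q -> seq Sigma;
  tout  : Q -> seq Sigma
}.

Section Defs.
Variables (Sigma Q : finType).

Fixpoint has_run (d : {set Q * Sigma * Q}) (p : Q) (u : seq Sigma) (q : Q) : Prop :=
  match u with
  | [::] => p = q
  | a :: u' => exists p', (p, a, p') \in d /\ has_run d p' u' q
  end.

Definition trans_congr (d : {set Q * Sigma * Q}) (u v : seq Sigma) : Prop :=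
  forall p q : Q, has_run d p u q <-> has_run d p v q.

Definition wpow (w : seq Sigma) (n : nat) : seq Sigma := flatten (nseq n w).

Definition aperiodic_congr (c : seq Sigma -> seq Sigma -> Prop) : Prop :=
  exists n : nat, forall w : seq Sigma, c (wpow w n) (wpow w n.+1).

Definition aperiodic_trans (T : transducer Sigma Q) : Prop :=
  aperiodic_congr (trans_congr (delta T)).

Definition deterministic (T : transducer Sigma Q) : Prop :=
  (#|init T| <= 1) /\
  (forall p a q1 q2, (p, a, q1) \in delta T -> (p, a, q2) \in delta T -> q1 = q2).

Fixpoint run_out (T : transducer Sigma Q) (p : Q) (u : seq Sigma) (q : Q)
    (w : seq Sigma) : Prop :=
  match u with
  | [::] => p = q /\ w = [::]
  | a :: u' => exists p' w', (p, a, p') \in delta T /\ w = out T p a p' ++ w'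
                              /\ run_out T p' u' q w'
  end.

Definition realizes_rel (T : transducer Sigma Q) (u v : seq Sigma) : Prop :=
  exists q0 qn w, q0 \in init T /\ qn \in fin T /\ run_out T q0 u qn w /\
                  v = iout T q0 ++ w ++ tout T qn.

Definition functional (T : transducer Sigma Q) : Prop :=
  forall u v1 v2, realizes_rel T u v1 -> realizes_rel T u v2 -> v1 = v2.

End Defs.

(* a (partial) transduction f : Sigma^* -> Sigma^* , None = undefined *)
Definition realizes (Sigma Q : finType) (T : transducer Sigma Q)
    (f : seq Sigma -> option (seq Sigma)) : Prop :=
  forall u v, f u = Some v <-> realizes_rel T u v.

Definition sequential_fun (Sigma : finType) (f : seq Sigma -> option (seq Sigma)) : Prop :=
  exists (Q : finType) (T : transducer Sigma Q), deterministic T /\ realizes T f.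

Definition Ap_rational (Sigma : finType) (f : seq Sigma -> option (seq Sigma)) : Prop :=
  exists (Q : finType) (T : transducer Sigma Q),
    functional T /\ aperiodic_trans T /\ realizes T f.

Definition Ap_sequential (Sigma : finType) (f : seq Sigma -> option (seq Sigma)) : Prop :=
  exists (Q : finType) (T : transducer Sigma Q),
    deterministic T /\ aperiodic_trans T /\ realizes T f.

From mathcomp Require Import all_boot zify.
From Stdlib Require Import Classical ClassicalEpsilon.
Set Implicit Arguments. Unset Strict Implicit. Unset Printing Implicit Defensive.

(* One direction holds because deterministic transducers are functional.
   Conversely, let T1 be sequential and T2 functional and aperiodic, both realizing
   f.  After reading x, the live states of T2 (reachable and coaccessible) have
   outputs that are all close to the output of T1 on x, hence they differ from
   their longest common prefix by a bounded delay.  Emitting that common prefix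
   and remembering the delays of the live states is a deterministic transducer
   with finitely many states (Choffrut's construction), and it realizes f.  It is
   aperiodic: for m large, the live runs on y u^m all pass synchronously through
   a state looping on u^a, and by aperiodicity of T2 also on u^(a+1).  Since
   pumped runs have outputs uniformly close to each other, the loop outputs are
   conjugate by the delays; as every large m is a sum of a's and (a+1)'s, the
   delays after y u^m and after y u^(m+1) coincide. *)

Section Words.
Variable T : finType.
Implicit Types (r s u v w : seq T).

Lemma catsI s : injective (cat s).
Proof. by move=> u v /(congr1 (drop (size s))); rewrite !drop_size_cat. Qed.

Lemma catIs s : injective (cat^~ s).
Proof.
move=> u v E; have Euv : size u = size v.
  by move: (congr1 size E); rewrite !size_cat => /addIn.
by rewrite -(take_size_cat s (erefl (size u))) E Euv take_size_cat.
Qed.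

Lemma prefix_cat_drop u s : prefix u s -> u ++ drop (size u) s = s.
Proof. by case/prefixP=> r ->; rewrite drop_size_cat. Qed.

Lemma take_cat_addn s t k : take (size s + k) (s ++ t) = s ++ take k t.
Proof. by rewrite takeD take_size_cat // drop_size_cat. Qed.

Lemma drop_cat_addn s t k : drop (size s + k) (s ++ t) = drop k t.
Proof. by rewrite addnC -drop_drop drop_size_cat. Qed.

Lemma wpowS w n : wpow w n.+1 = w ++ wpow w n. Proof. by []. Qed.

Lemma wpow1 w : wpow w 1 = w. Proof. exact: cats0. Qed.

Lemma wpowD w m n : wpow w (m + n) = wpow w m ++ wpow w n.
Proof. by elim: m => [|m IH] //=; rewrite addSn wpowS IH catA. Qed.

Lemma size_wpow w n : size (wpow w n) = n * size w.
Proof. by elim: n => [|n IH] //=; rewrite wpowS size_cat IH mulSn. Qed.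

Lemma wpow0s n : wpow [::] n = [::] :> seq T.
Proof. by elim: n. Qed.

Lemma cat_conj r u v u' v' :
  u ++ r = r ++ v -> u' ++ r = r ++ v' -> (u ++ u') ++ r = r ++ v ++ v'.
Proof. by move=> h h'; rewrite -catA h' catA h catA. Qed.

Lemma wpow_conj r u v n : u ++ r = r ++ v -> wpow u n ++ r = r ++ wpow v n.
Proof.
by move=> h; elim: n => [|n IH]; [rewrite /= cats0 | rewrite !wpowS (cat_conj h IH)].
Qed.

Fixpoint lcp u v : seq T :=
  match u, v with
  | x :: u', y :: v' => if x == y then x :: lcp u' v' else [::]
  | _, _ => [::]
  end.

Lemma prefix_lcpl u v : prefix (lcp u v) u.
Proof. by elim: u v => [|x u IH] [|y v] //=; case: eqP => _ //=; rewrite eqxx IH. Qed.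

Lemma prefix_lcpr u v : prefix (lcp u v) v.
Proof. by elim: u v => [|x u IH] [|y v] //=; case: eqP => [->|] //=; rewrite eqxx IH. Qed.

Lemma prefix_lcp s u v : prefix s u -> prefix s v -> prefix s (lcp u v).
Proof.
elim: s u v => [|z s IH] [|x u] [|y v] //=; first by case: (x == y).
by case/andP=> /eqP <- Hu /andP [/eqP <- Hv]; rewrite eqxx /= eqxx IH.
Qed.

Lemma lcp_catl s u v : lcp (s ++ u) (s ++ v) = s ++ lcp u v.
Proof. by elim: s => [|x s IH] //=; rewrite eqxx IH. Qed.

Fixpoint lcp_seq (l : seq (seq T)) : seq T :=
  match l with
  | [::] => [::]
  | [:: s] => s
  | s :: l' => lcp s (lcp_seq l')
  end.

Lemma lcp_seq_prefix l s : s \in l -> prefix (lcp_seq l) s.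
Proof.
elim: l => [|t [|t' l] IH] //=.
  by rewrite mem_seq1 => /eqP ->; exact: prefix_refl.
rewrite in_cons => /orP [/eqP ->|Hs]; first exact: prefix_lcpl.
exact: prefix_trans (prefix_lcpr _ _) (IH Hs).
Qed.

Lemma prefix_lcp_seq l s :
  l != [::] -> (forall t, t \in l -> prefix s t) -> prefix s (lcp_seq l).
Proof.
elim: l => [|t [|t' l] IH] // _ H; first by apply: H; rewrite mem_head.
apply: prefix_lcp; first by apply: H; rewrite mem_head.
by apply: IH => // t'' Ht; apply: H; rewrite in_cons Ht orbT.
Qed.

Lemma lcp_seq_catl s l : l != [::] -> lcp_seq (map (cat s) l) = s ++ lcp_seq l.
Proof.
elim: l => [|t [|t' l] IH] //= _.
by move: IH => /= -> //; exact: lcp_catl.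
Qed.

Definition close (C : nat) u v := exists s t, size s <= C /\ size t <= C /\ u ++ s = v ++ t.

Lemma close_size C u v : close C u v -> size u <= size v + C /\ size v <= size u + C.
Proof. by case=> s [t [Hs [Ht /(congr1 size)]]]; rewrite !size_cat; lia. Qed.

Lemma close_take C u v k : close C u v -> k <= size u -> k <= size v ->
  take k u = take k v.
Proof. by case=> s [t [_ [_ E]]] hu hv; rewrite -(takel_cat s hu) E takel_cat. Qed.

Lemma close_take2 C u v o k : close C u o -> close C v o -> k + C + C <= size u ->
  take k u = take k v.
Proof.
move=> Hu Hv hk; have [h1 h2] := close_size Hu; have [h3 h4] := close_size Hv.
by rewrite (close_take Hu) ?(close_take Hv) //; lia.
Qed.

End Words.

Lemma leq_of_linear (x y a b : nat) : (forall c, c * a + x <= c * b + y) -> a <= b.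
Proof.
move=> H; rewrite leqNgt; apply/negP => hlt.
have := H (x + y).+1.
have : (x + y).+1 * b.+1 <= (x + y).+1 * a by rewrite leq_mul2l hlt orbT.
rewrite mulnS; lia.
Qed.

Lemma sum_consecutive_multiples a n : a * a <= n -> exists c1 c2, n = a * c1 + a.+1 * c2.
Proof.
move=> hn; case: (posnP a) => [->|a_gt0]; first by exists 0, n; rewrite mul1n.
exists (n %/ a - n %% a), (n %% a).
have hra : n %% a <= n %/ a by rewrite ltnW // (leq_trans (_ : n %% a < a)) ?ltn_mod // leq_divRL.
by rewrite mulSn addnCA -mulnDr subnK // [in LHS](divn_eq n a) mulnC addnC.
Qed.

Definition pumped_close (T : finType) C (al be ga al' be' ga' : seq T) :=
  forall c, exists o, close C (al ++ wpow be c ++ ga) o /\ close C (al' ++ wpow be' c ++ ga') o.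

Section Pumping.
Variables (T : finType) (C : nat).
Implicit Types (al be ga r : seq T).

Lemma pumped_close_sym al be ga al' be' ga' :
  pumped_close C al be ga al' be' ga' -> pumped_close C al' be' ga' al be ga.
Proof. by move=> pc c; have [o [h h']] := pc c; exists o. Qed.

Lemma pumped_take al be ga al' be' ga' c k :
  pumped_close C al be ga al' be' ga' -> k + C + C <= size (al ++ wpow be c ++ ga) ->
  take k (al ++ wpow be c ++ ga) = take k (al' ++ wpow be' c ++ ga').
Proof. by move=> pc hk; have [o [h h']] := pc c; exact: close_take2 h h' hk. Qed.

Lemma pumped_size_le al be ga al' be' ga' :
  pumped_close C al be ga al' be' ga' -> size be <= size be'.
Proof.
move=> pc; apply: (@leq_of_linear (size al + size ga) (size al' + size ga' + C + C)) => c.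
have [o [/close_size h /close_size h']] := pc c.
by move: h h'; rewrite !size_cat !size_wpow; lia.
Qed.

Lemma pumped_size_eq al be ga al' be' ga' :
  pumped_close C al be ga al' be' ga' -> size be = size be'.
Proof.
by move=> pc; apply/eqP; rewrite eqn_leq !(pumped_size_le pc, pumped_size_le (pumped_close_sym pc)).
Qed.

Lemma size_pumped_ge al be ga c : be != [::] -> c <= size (al ++ wpow be c ++ ga).
Proof.
rewrite -size_eq0 -lt0n => hbe; rewrite !size_cat size_wpow.
by rewrite addnCA (leq_trans (leq_pmulr c hbe)) ?leq_addr.
Qed.

Lemma pumped_prefix al be ga al' be' ga' : pumped_close C al be ga al' be' ga' ->
  be != [::] -> size al <= size al' -> prefix al al'.
Proof.
move=> pc hbe hal; set c := size al + C + C.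
have := pumped_take (c := c) (k := size al) pc (size_pumped_ge _ _ _ hbe).
by rewrite take_size_cat // takel_cat // prefixE => /esym/eqP.
Qed.

Lemma pumped_prefix_comparable al be ga al' be' ga' :
  pumped_close C al be ga al' be' ga' -> be != [::] -> prefix al al' || prefix al' al.
Proof.
move=> pc hbe; case: (leqP (size al) (size al')) => h; first by rewrite (pumped_prefix pc).
have hbe' : be' != [::] by rewrite -size_eq0 -(pumped_size_eq pc) size_eq0.
by rewrite (pumped_prefix (pumped_close_sym pc) hbe' (ltnW h)) orbT.
Qed.

Lemma pumped_conjugate al be ga be' ga' r :
  pumped_close C al be ga (al ++ r) be' ga' -> be ++ r = r ++ be'.
Proof.
move=> pc; have Esz := pumped_size_eq pc.
have [be0|hbe] := eqVneq be [::].
  by move: Esz; rewrite be0 => /esym/size0nil ->; rewrite cats0.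
set c := size al + size r + size be + C + C.
have hk c' k : c <= c' -> k <= size be + size r ->
    size al + k + C + C <= size (al ++ wpow be c' ++ ga).
  by move=> hc hk; apply: leq_trans (size_pumped_ge _ _ _ hbe); rewrite /c in hc; lia.
have E1 := pumped_take pc (hk c _ (leqnn _) (leq_addl _ _)).
rewrite take_cat_addn -catA take_cat_addn (take_size_cat _ (erefl (size r))) in E1.
move/catsI in E1.
have E2 := pumped_take pc (hk c.+1 _ (leqnSn _) (leqnn _)).
rewrite wpowS -[(be ++ _) ++ ga]catA 2!take_cat_addn E1 in E2.
rewrite -catA take_cat_addn addnC take_cat_addn wpowS -catA Esz take_size_cat // in E2.
by move/catsI: E2.
Qed.

End Pumping.

Section PrefixFamilies.
Variables (T : finType) (I : finType) (S : {set I}).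

Lemma prefix_least_of_comparable (al : I -> seq T) q1 : q1 \in S ->
  (forall q q', q \in S -> q' \in S -> prefix (al q) (al q') || prefix (al q') (al q)) ->
  exists2 q0, q0 \in S & forall q, q \in S -> prefix (al q0) (al q).
Proof.
move=> Hq1 Hcomp; case: (arg_minnP (fun q => size (al q)) Hq1) => q0 Hq0 Hmin.
exists q0 => // q Hq; case/orP: (Hcomp q0 q Hq0 Hq) => // Hp.
have Esz : size (al q) = size (al q0) by apply/eqP; rewrite eqn_leq size_prefix ?Hmin.
by move: Hp; rewrite !prefixE Esz take_size => /eqP ->; rewrite take_size.
Qed.

Lemma pumped_family_conjugate C (al be1 be2 ga : I -> seq T) :
  (forall q q', q \in S -> q' \in S ->
     pumped_close C (al q) (be1 q) (ga q) (al q') (be1 q') (ga q')) ->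
  (forall q q', q \in S -> q' \in S ->
     pumped_close C (al q) (be2 q) (ga q) (al q') (be2 q') (ga q')) ->
  exists P rho B1 B2, forall q, q \in S ->
    [/\ al q = P ++ rho q, B1 ++ rho q = rho q ++ be1 q & B2 ++ rho q = rho q ++ be2 q].
Proof.
move=> pc1 pc2.
have [[q1 [Hq1 Hne]]|Hnil] := classic (exists q1, q1 \in S /\ (be1 q1 != [::]) || (be2 q1 != [::])).
  have Hcomp q q' : q \in S -> q' \in S -> prefix (al q) (al q') || prefix (al q') (al q).
    move=> Hq Hq'; case/orP: Hne => Hne.
    + apply: (pumped_prefix_comparable (pc1 q q' Hq Hq')).
      by rewrite -size_eq0 (pumped_size_eq (pc1 q q1 Hq Hq1)) size_eq0.
    + apply: (pumped_prefix_comparable (pc2 q q' Hq Hq')).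
      by rewrite -size_eq0 (pumped_size_eq (pc2 q q1 Hq Hq1)) size_eq0.
  have [q0 Hq0 Hleast] := prefix_least_of_comparable Hq1 Hcomp.
  exists (al q0), (fun q => drop (size (al q0)) (al q)), (be1 q0), (be2 q0) => q Hq.
  have Eal : al q = al q0 ++ drop (size (al q0)) (al q) by rewrite prefix_cat_drop ?Hleast.
  by split=> //; apply: (@pumped_conjugate _ C (al q0) _ (ga q0) _ (ga q)); rewrite -Eal; auto.
exists [::], al, [::], [::] => q Hq.
have : ~~ ((be1 q != [::]) || (be2 q != [::])) by apply/negP => Hne; apply: Hnil; exists q.
by rewrite negb_or !negbK => /andP [/eqP -> /eqP ->]; split; rewrite ?cats0.
Qed.

End PrefixFamilies.

Section Runs.
Variables (Sigma Q : finType).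
Implicit Types (d : {set Q * Sigma * Q}) (T : transducer Sigma Q) (u v w y : seq Sigma).

Lemma has_run_cat d p u v q :
  has_run d p (u ++ v) q <-> exists r, has_run d p u r /\ has_run d r v q.
Proof.
elim: u p => [|a u IH] p /=; first by split; [exists p | case=> r [->]].
split; first by case=> p' [Hd /IH [r [H1 H2]]]; exists r; split=> //; exists p'.
by case=> r [[p' [Hd H1]] H2]; exists p'; split=> //; apply/IH; exists r.
Qed.

Lemma run_out_cat T p u v q w :
  run_out T p (u ++ v) q w <->
  exists r w1 w2, run_out T p u r w1 /\ run_out T r v q w2 /\ w = w1 ++ w2.
Proof.
elim: u p w => [|a u IH] p w /=.
  by split; [exists p, [::], w | case=> r [w1 [w2 [[-> ->] [H ->]]]]].
split.
- case=> p' [w' [Hd [-> /IH [r [w1 [w2 [H1 [H2 ->]]]]]]]].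
  by exists r, (out T p a p' ++ w1), w2; rewrite catA; split=> //; exists p', w1.
- case=> r [w1 [w2 [[p' [w' [Hd [-> H1]]]] [H2 ->]]]].
  by exists p', (w' ++ w2); rewrite catA; split=> //; split=> //; apply/IH; exists r, w', w2.
Qed.

Lemma has_run_out T p u q : has_run (delta T) p u q <-> exists w, run_out T p u q w.
Proof.
elim: u p => [|a u IH] p /=; first by split; [move=> ->; exists [::] | case=> w [->]].
split; first by case=> p' [Hd /IH [w H]]; exists (out T p a p' ++ w), p', w.
by case=> w [p' [w' [Hd [_ H]]]]; exists p'; split=> //; apply/IH; exists w'.
Qed.

Lemma has_run_wpow_loop d s u k n : has_run d s (wpow u k) s -> has_run d s (wpow u (k * n)) s.
Proof.
move=> H; elim: n => [|n IH]; first by rewrite muln0.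
by rewrite mulnS wpowD; apply/has_run_cat; exists s.
Qed.

Lemma run_out_wpow_loop T s u k n L : run_out T s (wpow u k) s L ->
  run_out T s (wpow u (k * n)) s (wpow L n).
Proof.
move=> H; elim: n => [|n IH]; first by rewrite muln0.
by rewrite mulnS wpowD wpowS; apply/run_out_cat; exists s, L, (wpow L n).
Qed.

Lemma run_out_det T p u q1 q2 w1 w2 : deterministic T ->
  run_out T p u q1 w1 -> run_out T p u q2 w2 -> q1 = q2 /\ w1 = w2.
Proof.
case=> _ Hd; elim: u p w1 w2 => [|a u IH] p w1 w2 /=; first by case=> <- -> [<- ->].
case=> p1 [w1' [H1 [-> R1]]] [p2 [w2' [H2 [-> R2]]]].
by move: R2; rewrite -(Hd _ _ _ _ H1 H2) => /(IH _ _ _ R1) [-> ->].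
Qed.

Lemma deterministic_init T q1 q2 : deterministic T ->
  q1 \in init T -> q2 \in init T -> q1 = q2.
Proof. by case=> /card_le1_eqP H _ h1 h2; exact: H. Qed.

Lemma deterministic_functional T : deterministic T -> functional T.
Proof.
move=> Hd u v1 v2 [q0 [qn [w [H0 [Hn [R ->]]]]]] [q0' [qn' [w' [H0' [Hn' [R' ->]]]]]].
by move: R'; rewrite -(deterministic_init Hd H0 H0') => /(run_out_det Hd R) [-> ->].
Qed.

Lemma has_run_wpow_path d p u n q : has_run d p (wpow u n) q ->
  exists st : nat -> Q, [/\ st 0 = p, st n = q & forall i, i < n -> has_run d (st i) u (st i.+1)].
Proof.
elim: n p => [|n IH] p /=; first by move=> ->; exists (fun _ => q).
rewrite wpowS => /has_run_cat [r [H1 /IH [st [E0 En Hi]]]].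
exists (fun i => if i is i'.+1 then st i' else p); split=> //.
by case=> [|i] hi; [rewrite E0 | exact: Hi].
Qed.

Lemma has_run_path d u n (st : nat -> Q) :
  (forall i, i < n -> has_run d (st i) u (st i.+1)) ->
  forall i j, i <= j -> j <= n -> has_run d (st i) (wpow u (j - i)) (st j).
Proof.
move=> H i; elim=> [|j IH] hij hjn; first by have -> : i = 0 by lia.
have [->|hne] := eqVneq i j.+1; first by rewrite subnn.
have -> : j.+1 - i = (j - i) + 1 by lia.
rewrite wpowD wpow1; apply/has_run_cat; exists (st j); split; first by apply: IH; lia.
by apply: H; lia.
Qed.

(* A pigeonhole argument on the maps [q |-> st_q i] from [Q] to [Q]. *)
Lemma has_run_synchronized_loops d (I0 S : {set Q}) y u n :
  #|{ffun Q -> Q}| <= n ->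
  (forall q, q \in S -> exists2 q0, q0 \in I0 & has_run d q0 (y ++ wpow u n) q) ->
  exists i l (s : Q -> Q), [/\ 0 < l, i + l <= n, l <= #|{ffun Q -> Q}| &
    forall q, q \in S -> [/\ exists2 q0, q0 \in I0 & has_run d q0 (y ++ wpow u i) (s q),
      has_run d (s q) (wpow u l) (s q) & has_run d (s q) (wpow u (n - i - l)) q]].
Proof.
set N := #|{ffun Q -> Q}| => hN Hrun.
pose Path q (x : Q * (nat -> Q)) := q \in S ->
  [/\ x.1 \in I0, has_run d x.1 y (x.2 0), x.2 n = q &
      forall i, i < n -> has_run d (x.2 i) u (x.2 i.+1)].
have [path Hpath] : exists path, forall q, Path q (path q).
  apply: ClassicalEpsilon.choice => q.
  have [/Hrun [q0 H0 /has_run_cat [r [Hy /has_run_wpow_path [st [E0 En Hst]]]]]|Hq] :=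
    boolP (q \in S); last by exists (q, fun _ => q) => /(negP Hq).
  by exists (q0, st) => _; split; rewrite //= E0.
pose sig (k : 'I_N.+1) := [ffun q => (path q).2 k].
have /injectivePn [i0 [j0 ne_ij E]] : ~~ injectiveb sig.
  by apply/injectiveP => /leq_card; rewrite card_ord -/N ltnn.
wlog lt_ij : i0 j0 ne_ij E / i0 < j0.
  move=> W; case: (ltngtP i0 j0) => h; first exact: (W i0 j0).
    by apply: (W j0 i0); rewrite // eq_sym.
  by rewrite (val_inj h) eqxx in ne_ij.
have Est q : (path q).2 i0 = (path q).2 j0 by move/ffunP/(_ q): E; rewrite !ffunE.
have hj : j0 <= N by rewrite -ltnS.
exists i0, (j0 - i0), (fun q => (path q).2 i0); split; [lia | lia | lia |].
move=> q /Hpath [H0 Hy En Hst]; split.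
- exists (path q).1 => //; apply/has_run_cat; exists ((path q).2 0); split=> //.
  by have := has_run_path Hst (leq0n i0) (leq_trans (ltnW lt_ij) (leq_trans hj hN)); rewrite subn0.
- by rewrite [X in has_run _ _ _ X]Est; apply: (has_run_path Hst); lia.
- have := has_run_path Hst (leq_trans hj hN) (leqnn n); rewrite En -Est.
  by rewrite (_ : n - i0 - (j0 - i0) = n - j0) //; lia.
Qed.

Lemma trans_congr_sym d u v : trans_congr d u v -> trans_congr d v u.
Proof. by move=> H p q; split; apply H. Qed.

Lemma trans_congr_trans d u v w : trans_congr d u v -> trans_congr d v w -> trans_congr d u w.
Proof. by move=> H1 H2 p q; split=> h; [apply/H2/H1 | apply/H1/H2]. Qed.

Lemma trans_congr_catl d y u v : trans_congr d u v -> trans_congr d (y ++ u) (y ++ v).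
Proof.
by move=> H p q; split; case/has_run_cat=> r [h1 h2]; apply/has_run_cat;
  exists r; split=> //; apply/H.
Qed.

Lemma aperiodic_wpow_stable d :
  aperiodic_congr (trans_congr d) ->
  exists N, forall w m, N <= m -> trans_congr d (wpow w m) (wpow w N).
Proof.
case=> N HN; exists N => w m hm; rewrite -(subnKC hm).
elim: (m - N) => [|k IH]; first by rewrite addn0.
rewrite addnS wpowS; apply: trans_congr_trans (trans_congr_catl w IH) _.
exact: trans_congr_sym.
Qed.

End Runs.

Definition pbool (P : Prop) : bool := if excluded_middle_informative P then true else false.

Lemma pboolP (P : Prop) : reflect P (pbool P).
Proof. by rewrite /pbool; case: excluded_middle_informative => h; constructor. Qed.

Lemma map_enum_neq0 (I : finType) (T : eqType) (A : {set I}) (F : I -> T) i :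
  i \in A -> [seq F j | j <- enum A] != [::].
Proof.
by move=> Hi; rewrite -size_eq0 size_map -cardE -lt0n card_gt0; apply/set0Pn; exists i.
Qed.

Section Sequentialization.
Variables (Sigma Q1 Q2 : finType) (T1 : transducer Sigma Q1) (T2 : transducer Sigma Q2)
  (f : seq Sigma -> option (seq Sigma)).
Hypotheses (det1 : deterministic T1) (real1 : realizes T1 f)
  (fun2 : functional T2) (real2 : realizes T2 f).
Implicit Types (u v w x y z o : seq Sigma).

Definition accept_out (Q : finType) (T : transducer Sigma Q) p w g : Prop :=
  exists qf v, [/\ qf \in fin T, run_out T p w qf v & g = v ++ tout T qf].

Definition coaccessible (q : Q2) : Prop := exists w g, accept_out T2 q w g.

Definition reach_out x q o : Prop :=
  exists q0 w, q0 \in init T2 /\ run_out T2 q0 x q w /\ o = iout T2 q0 ++ w.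

Definition live x : {set Q2} := [set q | pbool (coaccessible q /\ exists o, reach_out x q o)].

Definition run_output x q : seq Sigma := epsilon (inhabits [::]) (reach_out x q).

Lemma liveP x q : reflect (coaccessible q /\ exists o, reach_out x q o) (q \in live x).
Proof. by rewrite inE; apply: pboolP. Qed.

Lemma live_coaccessible x q : q \in live x -> coaccessible q.
Proof. by case/liveP. Qed.

Lemma reach_out_fin x q o : reach_out x q o -> q \in fin T2 -> f x = Some (o ++ tout T2 q).
Proof.
by case=> q0 [w [H0 [R ->]]] Hf; apply/real2; exists q0, q, w; rewrite catA.
Qed.

Lemma fin_reach_out x v : f x = Some v ->
  exists q o, [/\ q \in fin T2, reach_out x q o & v = o ++ tout T2 q].
Proof.
move/real2=> [q0 [qn [w [H0 [Hn [R ->]]]]]].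
by exists qn, (iout T2 q0 ++ w); rewrite catA; split=> //; exists q0, w.
Qed.

Lemma reach_out_cat x z q o : reach_out (x ++ z) q o <->
  exists r o1 o2, [/\ reach_out x r o1, run_out T2 r z q o2 & o = o1 ++ o2].
Proof.
split.
- case=> q0 [w [H0 [/run_out_cat [r [w1 [w2 [Ra [Rb ->]]]]] ->]]].
  by exists r, (iout T2 q0 ++ w1), w2; rewrite catA; split=> //; exists q0, w1.
- case=> r [o1 [o2 [[q0 [w1 [H0 [Ra ->]]]] Rb ->]]].
  exists q0, (w1 ++ o2); rewrite catA; split=> //; split=> //.
  by apply/run_out_cat; exists r, w1, o2.
Qed.

(* Complete both runs to acceptance and use functionality of [T2]. *)
Lemma reach_out_uniq x q o1 o2 : coaccessible q -> reach_out x q o1 -> reach_out x q o2 ->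
  o1 = o2.
Proof.
case=> w [g [qf [v [Hf Rv _]]]] R1 R2.
have Hrel o : reach_out x q o -> realizes_rel T2 (x ++ w) (o ++ v ++ tout T2 qf).
  case=> q0 [w0 [H0 [R ->]]]; exists q0, qf, (w0 ++ v); do 3!split=> //; last by rewrite -!catA.
  by apply/run_out_cat; exists q, w0, v.
exact: catIs (fun2 (Hrel _ R1) (Hrel _ R2)).
Qed.

Lemma run_output_reach x q : q \in live x -> reach_out x q (run_output x q).
Proof. by case/liveP=> _; exact: epsilon_spec. Qed.

Lemma run_output_eq x q o : coaccessible q -> reach_out x q o -> run_output x q = o.
Proof. by move=> Hc Hr; apply: (reach_out_uniq Hc _ Hr); apply: epsilon_spec; exists o. Qed.

Lemma coaccessible_back p w q : has_run (delta T2) p w q -> coaccessible q -> coaccessible p.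
Proof.
case/has_run_out=> o1 Ro [w' [g [qf [v [Hf Rv _]]]]].
exists (w ++ w'), (o1 ++ v ++ tout T2 qf), qf, (o1 ++ v); rewrite catA; split=> //.
by apply/run_out_cat; exists q, o1, v.
Qed.

Lemma reach_out_has_run x q o : reach_out x q o ->
  exists2 q0, q0 \in init T2 & has_run (delta T2) q0 x q.
Proof. by case=> q0 [w [H0 [R _]]]; exists q0 => //; apply/has_run_out; exists w. Qed.

Lemma has_run_reach_out x q q0 : q0 \in init T2 -> has_run (delta T2) q0 x q ->
  exists o, reach_out x q o.
Proof. by move=> H0 /has_run_out [w R]; exists (iout T2 q0 ++ w), q0, w. Qed.

Lemma has_run_live x q q0 : q0 \in init T2 -> has_run (delta T2) q0 x q -> coaccessible q ->
  q \in live x.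
Proof. by move=> H0 R Hc; apply/liveP; split=> //; exact: has_run_reach_out R. Qed.

(* For every state [q] fix a word [completion q] leading it to acceptance.  On any
   input [x] reaching [q], both [T1] and [T2] output [f (x ++ completion q)]; from the
   state reached in [T1] the completion outputs [completion_out1], from [q] in [T2]
   it outputs [completion_out2], so the outputs on [x] differ by at most
   [delay_bound] letters. *)
Definition completion (q : Q2) : seq Sigma :=
  epsilon (inhabits [::]) (fun w => exists g, accept_out T2 q w g).

Definition completion_out2 (q : Q2) : seq Sigma :=
  epsilon (inhabits [::]) (accept_out T2 q (completion q)).

Definition completion_out1 (p : Q1) (q : Q2) : seq Sigma :=
  epsilon (inhabits [::]) (accept_out T1 p (completion q)).

Definition delay_bound : nat :=
  \max_(p : Q1) \max_(q : Q2) (size (completion_out1 p q) + size (completion_out2 q)).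

Definition seq_output x o : Prop :=
  exists i1 p w1, [/\ i1 \in init T1, run_out T1 i1 x p w1 & o = iout T1 i1 ++ w1].

Lemma seq_output_uniq x o1 o2 : seq_output x o1 -> seq_output x o2 -> o1 = o2.
Proof.
case=> i1 [p1 [w1 [H1 Ra ->]]] [i2 [p2 [w2 [H2 Rb ->]]]].
by move: Rb; rewrite -(deterministic_init det1 H1 H2) => /(run_out_det det1 Ra) [_ ->].
Qed.

Lemma reach_out_close_seq x q o : coaccessible q -> reach_out x q o ->
  exists2 o1, seq_output x o1 & close delay_bound o o1.
Proof.
move=> [w Hw] Hr.
have [qf [v [Hf Rv Eg]]] : accept_out T2 q (completion q) (completion_out2 q).
  apply: epsilon_spec; apply: (epsilon_spec _ (fun w => exists g, accept_out T2 q w g)).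
  by exists w.
have Hfx : f (x ++ completion q) = Some (o ++ completion_out2 q).
  by rewrite Eg catA; apply: reach_out_fin Hf; apply/reach_out_cat; exists q, o, v.
case/real1: Hfx => i1 [qn [W [H1 [Hn [/run_out_cat [p [w1 [w2 [Ra [Rb ->]]]]] EW]]]]].
exists (iout T1 i1 ++ w1); first by exists i1, p, w1.
have [qf' [v' [Hf' Rv' EG]]] : accept_out T1 p (completion q) (completion_out1 p q).
  by apply: epsilon_spec; exists (w2 ++ tout T1 qn), qn, w2.
have [Eqf Ev] := run_out_det det1 Rv' Rb; subst qf' v'.
have Hle : size (completion_out1 p q) + size (completion_out2 q) <= delay_bound.
  by apply: leq_trans (leq_bigmax p); exact: leq_bigmax q.
exists (completion_out2 q), (completion_out1 p q).
split; [exact: leq_trans (leq_addl _ _) Hle | split; first exact: leq_trans (leq_addr _ _) Hle].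
by rewrite EW EG -!catA.
Qed.

Lemma reach_out_close x q q' o o' : coaccessible q -> coaccessible q' ->
  reach_out x q o -> reach_out x q' o' ->
  exists o1, close delay_bound o o1 /\ close delay_bound o' o1.
Proof.
move=> Hc Hc' Hr Hr'; have [o1 P1 C1] := reach_out_close_seq Hc Hr.
have [o2 P2] := reach_out_close_seq Hc' Hr'; rewrite -(seq_output_uniq P1 P2) => C2.
by exists o1.
Qed.

Definition common_output x : seq Sigma := lcp_seq [seq run_output x q | q <- enum (live x)].

Lemma common_output_prefix x q : q \in live x -> prefix (common_output x) (run_output x q).
Proof. by move=> Hq; apply: lcp_seq_prefix; apply: map_f; rewrite mem_enum. Qed.

(* All live outputs are close to the single output of [T1], so they share all but
   their last [2 * delay_bound] letters. *)
Lemma size_delay_le x q : q \in live x ->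
  size (drop (size (common_output x)) (run_output x q)) <= delay_bound + delay_bound.
Proof.
move=> Hq; set C := delay_bound.
have [o1 P1 _] := reach_out_close_seq (live_coaccessible Hq) (run_output_reach Hq).
have Hall q' : q' \in live x -> close C (run_output x q') o1.
  move=> Hq'; have [o2 P2 C2] := reach_out_close_seq (live_coaccessible Hq') (run_output_reach Hq').
  by rewrite (seq_output_uniq P1 P2).
have Hpre : prefix (take (size o1 - C) o1) (common_output x).
  apply: prefix_lcp_seq; first exact: map_enum_neq0 Hq.
  move=> s /mapP [q' Hq' ->]; rewrite mem_enum in Hq'.
  have Cq := Hall q' Hq'; have [h1 h2] := close_size Cq.
  by rewrite prefixE size_takel ?leq_subr // (close_take Cq) //; lia.
have Hs := size_prefix Hpre; rewrite size_takel ?leq_subr // in Hs.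
have [h1 h2] := close_size (Hall q Hq).
by rewrite size_drop; set n := size (common_output x) in Hs *; lia.
Qed.

Definition max_delay : nat := delay_bound + delay_bound.

Definition delay_state := {ffun Q2 -> option (max_delay.-bseq Sigma)}.

Definition delays x : delay_state := [ffun q => if q \in live x then
  Some (insub_bseq max_delay (drop (size (common_output x)) (run_output x q))) else None].

Definition delay (D : delay_state) q : seq Sigma := if D q is Some b then val b else [::].

Lemma delays_neq_None x q : (delays x q != None) = (q \in live x).
Proof. by rewrite ffunE; case: ifP. Qed.

Lemma run_output_common_delay x q : q \in live x ->
  run_output x q = common_output x ++ delay (delays x) q.
Proof.
move=> Hq; rewrite /delay ffunE Hq /insub_bseq val_insubd size_delay_le //.
by rewrite prefix_cat_drop // common_output_prefix.
Qed.

Definition pred_state (D : delay_state) a q' : option Q2 :=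
  [pick q | (D q != None) && ((q, a, q') \in delta T2)].

Definition next_live (D : delay_state) a : {set Q2} :=
  [set q' | pbool (coaccessible q') && (pred_state D a q' != None)].

Definition pre_output (D : delay_state) a q' : seq Sigma :=
  if pred_state D a q' is Some q then delay D q ++ out T2 q a q' else [::].

Definition next_output (D : delay_state) a : seq Sigma :=
  lcp_seq [seq pre_output D a q' | q' <- enum (next_live D a)].

Definition next_delays (D : delay_state) a : delay_state := [ffun q' => if q' \in next_live D a
  then Some (insub_bseq max_delay (drop (size (next_output D a)) (pre_output D a q'))) else None].

Lemma run_out1 p a q o : run_out T2 p [:: a] q o <-> (p, a, q) \in delta T2 /\ o = out T2 p a q.
Proof.
split; first by case=> p' [w' [H [-> [<- ->]]]]; rewrite cats0.
by case=> H ->; exists q, [::]; rewrite cats0.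
Qed.

Lemma live_rcons x a : live (x ++ [:: a]) = next_live (delays x) a.
Proof.
apply/setP=> q'; rewrite [in RHS]inE; apply/idP/idP.
- case/liveP=> Hc [o /reach_out_cat [r [o1 [o2 [Hr /run_out1 [Ht _] _]]]]].
  have Hrc : coaccessible r.
    apply: (coaccessible_back (w := [:: a]) _ Hc).
    by apply/has_run_out; exists (out T2 r a q'); apply/run_out1.
  have HrS : r \in live x by apply/liveP; split=> //; exists o1.
  apply/andP; split; first exact/pboolP.
  by rewrite /pred_state; case: pickP => // /(_ r); rewrite delays_neq_None HrS Ht.
- case/andP=> /pboolP Hc; rewrite /pred_state; case: pickP => // q /andP [Hq Ht] _.
  rewrite delays_neq_None in Hq; apply/liveP; split=> //.
  exists (run_output x q ++ out T2 q a q'); apply/reach_out_cat.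
  exists q, (run_output x q), (out T2 q a q').
  by split=> //; [exact: run_output_reach | exact/run_out1].
Qed.

Lemma run_output_rcons x a q' : q' \in live (x ++ [:: a]) ->
  run_output (x ++ [:: a]) q' = common_output x ++ pre_output (delays x) a q'.
Proof.
move=> Hq'; have Hc := live_coaccessible Hq'.
move: Hq'; rewrite live_rcons inE => /andP [_]; rewrite /pre_output /pred_state.
case: pickP => // q /andP [Hq Ht] _; rewrite delays_neq_None in Hq.
rewrite catA -run_output_common_delay //; apply: run_output_eq Hc _.
apply/reach_out_cat; exists q, (run_output x q), (out T2 q a q').
by split=> //; [exact: run_output_reach | exact/run_out1].
Qed.

Lemma common_output_rcons x a q' : q' \in live (x ++ [:: a]) ->
  common_output (x ++ [:: a]) = common_output x ++ next_output (delays x) a.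
Proof.
move=> Hq'; rewrite /common_output /next_output -lcp_seq_catl; last first.
  by apply: (@map_enum_neq0 _ _ _ _ q'); rewrite -live_rcons.
rewrite -map_comp -live_rcons; congr lcp_seq; apply/eq_in_map => p.
by rewrite mem_enum => Hp /=; exact: run_output_rcons.
Qed.

Lemma delays_rcons x a : delays (x ++ [:: a]) = next_delays (delays x) a.
Proof.
apply/ffunP=> q'; rewrite !ffunE -live_rcons; case: ifP => // H.
by rewrite (common_output_rcons H) (run_output_rcons H) size_cat drop_cat_addn.
Qed.

Lemma live_prefix x z q : q \in live (x ++ z) -> exists r, r \in live x.
Proof.
case/liveP=> Hc [o /reach_out_cat [r [o1 [o2 [Hr Ro _]]]]]; exists r; apply/liveP.
by split; [apply: (coaccessible_back (w := z) _ Hc); apply/has_run_out; exists o2 | exists o1].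
Qed.

Definition final_pick (D : delay_state) : option Q2 := [pick q | (q \in fin T2) && (D q != None)].

(* Transitions only leave reachable delay states, so that the unreachable ones
   carry no runs at all and cannot break aperiodicity. *)
Definition seq_transducer : transducer Sigma delay_state := Transducer
  [set t : delay_state * Sigma * delay_state |
     pbool (exists x, t.1.1 = delays x) && (t.2 == next_delays t.1.1 t.1.2)]
  [set delays [::]]
  [set D : delay_state | [exists q, (q \in fin T2) && (D q != None)]]
  (fun D a _ => next_output D a)
  (fun _ => common_output [::])
  (fun D => if final_pick D is Some q then delay D q ++ tout T2 q else [::]).

Lemma seq_transducer_deterministic : deterministic seq_transducer.
Proof.
split; first by rewrite cards1.
by move=> p a q1 q2; rewrite !inE /= => /andP [_ /eqP ->] /andP [_ /eqP ->].
Qed.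

Lemma seq_transducer_trans y a D :
  ((delays y, a, D) \in delta seq_transducer) = (D == delays (y ++ [:: a])).
Proof.
have Hy : pbool (exists x, delays y = delays x) by apply/pboolP; exists y.
by rewrite inE /= delays_rcons Hy.
Qed.

Lemma run_seq_transducer y u D w : run_out seq_transducer (delays y) u D w ->
  D = delays (y ++ u) /\
  forall q, q \in live (y ++ u) -> common_output (y ++ u) = common_output y ++ w.
Proof.
elim: u y w => [|a u IH] y w /=; first by case=> <- ->; rewrite !cats0.
case=> p' [w' [+ [-> R]]]; rewrite seq_transducer_trans => /eqP Ep; subst p'.
have [-> H] := IH _ _ R; rewrite -catA /=; split=> // q Hq.
have Hq' : q \in live ((y ++ [:: a]) ++ u) by rewrite -catA.
have [r Hr] := live_prefix Hq'.
by move: (H q Hq'); rewrite -catA /= => ->; rewrite (common_output_rcons Hr) catA.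
Qed.

Lemma run_seq_transducer_ex y u : exists w, run_out seq_transducer (delays y) u (delays (y ++ u)) w.
Proof.
elim: u y => [|a u IH] y /=; first by exists [::]; rewrite cats0.
have [w R] := IH (y ++ [:: a]); rewrite -catA in R.
by exists (next_output (delays y) a ++ w), (delays (y ++ [:: a])), w; rewrite seq_transducer_trans.
Qed.

Lemma seq_transducer_realizes : realizes seq_transducer f.
Proof.
move=> u v; split.
- move=> Hf; have [qf [o [Hqf Hr Ev]]] := fin_reach_out Hf.
  have Hc : coaccessible qf by exists [::], (tout T2 qf), qf, [::].
  have HqS : qf \in live u by apply/liveP; split=> //; exists o.
  have [w R] := run_seq_transducer_ex [::] u; have [_ HL] := run_seq_transducer R.
  exists (delays [::]), (delays u), w; split; first by rewrite inE.
  split; first by rewrite inE; apply/existsP; exists qf; rewrite Hqf delays_neq_None HqS.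
  split=> //=; rewrite /final_pick; case: pickP => [q /andP [Hq Hn]|]; last first.
    by move/(_ qf); rewrite Hqf delays_neq_None HqS.
  rewrite delays_neq_None in Hn.
  have := reach_out_fin (run_output_reach Hn) Hq; rewrite Hf => -[->].
  by rewrite (run_output_common_delay Hn) !catA -(HL qf HqS).
- case=> D0 [Dn [w [+ [Hn [R ->]]]]]; rewrite inE => /eqP E0; subst D0.
  move/run_seq_transducer: R => [ED HL]; subst Dn.
  move: Hn; rewrite inE => /existsP [q0 /andP [Hq0 Hn0]].
  rewrite /= /final_pick; case: pickP => [q /andP [Hq Hn]|]; last by move/(_ q0); rewrite Hq0 Hn0.
  rewrite delays_neq_None in Hn.
  rewrite (reach_out_fin (run_output_reach Hn) Hq) (run_output_common_delay Hn).
  by rewrite (HL q Hn) /= !catA.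
Qed.

Lemma live_trans_congr y v v' : trans_congr (delta T2) v v' -> live (y ++ v) = live (y ++ v').
Proof.
move=> H; apply/setP => q; apply/idP/idP => /liveP [Hc [o]]
  /reach_out_has_run [q0 H0 /has_run_cat [r [h1 h2]]];
  by apply: (has_run_live H0 _ Hc); apply/has_run_cat; exists r; split=> //; apply/H.
Qed.

Lemma delays_eq_shift x x' L L' (tau : Q2 -> seq Sigma) : live x = live x' ->
  (forall q, q \in live x -> run_output x q = L ++ tau q /\ run_output x' q = L' ++ tau q) ->
  delays x = delays x'.
Proof.
move=> ES H; apply/ffunP => q; rewrite !ffunE -ES; case: ifP => // Hq.
have Ecommon x'' L'' : live x'' = live x ->
    (forall q, q \in live x -> run_output x'' q = L'' ++ tau q) ->
    common_output x'' = L'' ++ lcp_seq [seq tau q | q <- enum (live x)].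
  move=> E H''; rewrite /common_output -lcp_seq_catl ?(map_enum_neq0 _ Hq) // -map_comp E.
  by congr lcp_seq; apply/eq_in_map => p; rewrite mem_enum => /H''.
rewrite (Ecommon x L) // => [|p /H [] //].
rewrite (Ecommon x' L') -?ES // => [|p /H [] //].
by rewrite (H q Hq).1 (H q Hq).2 !size_cat !drop_cat_addn.
Qed.

Lemma reach_out_loop x z v s q o L g : reach_out x s o ->
  run_out T2 s z s L -> run_out T2 s v q g -> reach_out (x ++ z ++ v) q (o ++ L ++ g).
Proof.
move=> Hr Rz Rv; apply/reach_out_cat; exists s, o, (L ++ g); split=> //.
by apply/run_out_cat; exists s, L, g.
Qed.

(* The pumping lemmas make the loop outputs conjugate by the live delays, so reading
   [u^n], with [n] a sum of [a]'s and [(a+1)]'s, only moves the common output. *)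
Lemma delays_pumped_eq x u v a n1 n2 (s : Q2 -> Q2) :
  live (x ++ wpow u n1 ++ v) = live (x ++ wpow u n2 ++ v) ->
  (forall q, q \in live (x ++ wpow u n1 ++ v) -> [/\ s q \in live x,
     has_run (delta T2) (s q) (wpow u a) (s q),
     has_run (delta T2) (s q) (wpow u a.+1) (s q) & has_run (delta T2) (s q) v q]) ->
  a * a <= n1 -> a * a <= n2 ->
  delays (x ++ wpow u n1 ++ v) = delays (x ++ wpow u n2 ++ v).
Proof.
set S := live (x ++ wpow u n1 ++ v) => ES Hs hn1 hn2.
pose Outs q (t : seq Sigma * seq Sigma * seq Sigma) := q \in S -> [/\
  run_out T2 (s q) (wpow u a) (s q) t.1.1, run_out T2 (s q) (wpow u a.+1) (s q) t.1.2
  & run_out T2 (s q) v q t.2].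
have [outs Houts] : exists outs, forall q, Outs q (outs q).
  apply: ClassicalEpsilon.choice => q; have [Hq|Hq] := boolP (q \in S); last first.
    by exists ([::], [::], [::]) => /(negP Hq).
  have [_ /has_run_out [b1 R1] /has_run_out [b2 R2] /has_run_out [g Rg]] := Hs q Hq.
  by exists (b1, b2, g).
pose al q := run_output x (s q); pose ga q := (outs q).2.
have Hreach q z L : q \in S -> run_out T2 (s q) z (s q) L ->
    reach_out (x ++ z ++ v) q (al q ++ L ++ ga q).
  move=> Hq Rz; have [Hsq _ _ _] := Hs q Hq; have [_ _ Rv] := Houts q Hq.
  exact: reach_out_loop (run_output_reach Hsq) Rz Rv.
have pc (B : Q2 -> seq Sigma) k :
    (forall q, q \in S -> run_out T2 (s q) (wpow u k) (s q) (B q)) ->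
    forall q q', q \in S -> q' \in S ->
    pumped_close delay_bound (al q) (B q) (ga q) (al q') (B q') (ga q').
  move=> HB q q' Hq Hq' c.
  apply: (reach_out_close (live_coaccessible Hq) (live_coaccessible Hq'));
    exact: Hreach (run_out_wpow_loop c (HB _ _)).
have [P [rho [B1 [B2 Hconj]]]] := pumped_family_conjugate
  (pc (fun q => (outs q).1.1) a (fun q Hq => let: And3 R _ _ := Houts q Hq in R))
  (pc (fun q => (outs q).1.2) a.+1 (fun q Hq => let: And3 _ R _ := Houts q Hq in R)).
have Hout n : a * a <= n -> exists L, forall q, q \in S ->
    run_output (x ++ wpow u n ++ v) q = L ++ rho q ++ ga q.
  case/sum_consecutive_multiples=> c1 [c2 ->].
  exists (P ++ wpow B1 c1 ++ wpow B2 c2) => q Hq.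
  have [Eal C1 C2] := Hconj q Hq; have [R1 R2 _] := Houts q Hq.
  have Rloop : run_out T2 (s q) (wpow u (a * c1 + a.+1 * c2)) (s q)
      (wpow (outs q).1.1 c1 ++ wpow (outs q).1.2 c2).
    rewrite wpowD; apply/run_out_cat; exists (s q), (wpow (outs q).1.1 c1), (wpow (outs q).1.2 c2).
    by split; [exact: run_out_wpow_loop | split; first exact: run_out_wpow_loop].
  rewrite (run_output_eq (live_coaccessible Hq) (Hreach q _ _ Hq Rloop)) Eal.
  have E := cat_conj (wpow_conj c1 C1) (wpow_conj c2 C2).
  by rewrite -!catA; congr (P ++ _); rewrite !catA E !catA.
have [L1 HL1] := Hout n1 hn1; have [L2 HL2] := Hout n2 hn2.
by apply: (delays_eq_shift ES) => q Hq; rewrite HL1 ?HL2 -?ES.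
Qed.

Lemma delays_wpow_stable : aperiodic_trans T2 ->
  exists M, forall y u, delays (y ++ wpow u M) = delays (y ++ wpow u M.+1).
Proof.
case/aperiodic_wpow_stable=> N HN.
set F := #|{ffun Q2 -> Q2}|; set m1 := N + F; set b := F * N.
exists (m1 + b * b) => y u.
have live_stable k : N <= k -> live (y ++ wpow u k) = live (y ++ wpow u N).
  by move=> hk; apply: live_trans_congr; exact: HN.
have [i [l [s [l_gt0 hil hlF Hs]]]] := has_run_synchronized_loops (S := live (y ++ wpow u m1))
  (leq_addl N F) (fun q Hq => reach_out_has_run (run_output_reach Hq)).
set a := l * N; set v := wpow u (m1 - i - l).
have Hword n : y ++ wpow u (i + n + (m1 - i - l)) = (y ++ wpow u i) ++ wpow u n ++ v.
  by rewrite !wpowD !catA.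
have E0 : m1 + b * b = i + (b * b + l) + (m1 - i - l) by lia.
have E1 : (m1 + b * b).+1 = i + (b * b + l).+1 + (m1 - i - l) by lia.
have hab : a * a <= b * b by apply: leq_mul; rewrite leq_mul2r hlF orbT.
rewrite E1 E0 !Hword; apply: delays_pumped_eq; last 2 first.
- exact: leq_trans hab (leq_addr _ _).
- exact: leq_trans hab (leqW (leq_addr _ _)).
- by rewrite -!Hword -E0 -E1 !live_stable //; lia.
move=> q; rewrite -Hword -E0 live_stable ?(leq_trans _ (leq_addr _ _)) ?leq_addr //.
rewrite -(live_stable m1) ?leq_addr // => /[dup] Hq /Hs [[q0 H0 Hi] Hl Hv].
split=> //.
- apply: (has_run_live H0 Hi); exact: coaccessible_back Hv (live_coaccessible Hq).
- exact: has_run_wpow_loop.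
- have hNa : N <= a by rewrite /a leq_pmull.
  by apply/(HN u a.+1 (leqW hNa))/(HN u a hNa); exact: has_run_wpow_loop.
- exact: Hv.
Qed.

Lemma seq_transducer_has_run y u D :
  has_run (delta seq_transducer) (delays y) u D <-> D = delays (y ++ u).
Proof.
split; first by case/has_run_out=> w /run_seq_transducer [].
by move=> ->; apply/has_run_out; exact: run_seq_transducer_ex.
Qed.

Lemma seq_transducer_run_source D a u D' :
  has_run (delta seq_transducer) D (a :: u) D' -> exists y, D = delays y.
Proof. by case=> D'' []; rewrite inE => /andP [/pboolP]. Qed.

Lemma seq_transducer_aperiodic : aperiodic_trans T2 -> aperiodic_trans seq_transducer.
Proof.
case/delays_wpow_stable=> M HM; exists M.+1 => w D D'.
case: w => [|a w]; first by rewrite !wpow0s.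
have [[y ->]|hD] := classic (exists y, D = delays y).
  have := HM (y ++ a :: w) (a :: w); rewrite -!catA -!wpowS => E.
  by rewrite !seq_transducer_has_run E.
by rewrite !wpowS /=; split=> /seq_transducer_run_source /hD.
Qed.

End Sequentialization.

Theorem theorem2p4 (Sigma : finType) (f : seq Sigma -> option (seq Sigma)) :
  sequential_fun f -> (Ap_sequential f <-> Ap_rational f).
Proof.
case=> Q1 [T1 [det1 real1]]; split.
- case=> Q [T [det [aper real]]].
  by exists Q, T; split; [exact: deterministic_functional | split].
- case=> Q2 [T2 [fun2 [aper2 real2]]].
  exists _, (seq_transducer T1 T2); split; first exact: seq_transducer_deterministic.
  split; [exact: seq_transducer_aperiodic | exact: seq_transducer_realizes].
Qed.
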